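(* Let $(X_i,\mathbf{x}_m,X_f)$ be an instance of the three-point Dubins path problem, and consider the class of $C_1S_2C_3S_4C_5$ paths with a fixed turning direction ($L$ or $R$) for each curved segment. If there exists a $C_1S_2C_3S_4C_5$ path in this class in which $S_2$ and $S_4$ are parallel and intersecting (i.e., lie on a common line), then this path is the shortest path in the class.
   Context: A Dubins vehicle moves forward in the plane with unit speed and minimum turning radius $R_{\min}$: $\dot x=\cos\alpha$, $\dot y=\sin\alpha$, $\dot\alpha=u$, $|u|\le 1/R_{\min}$. A configuration is $X=(\mathbf{x},\alpha)$. The three-point Dubins path problem: given configurations $X_i$, $X_f$ and a midpoint $\mathbf{x}_m$ (pairwise distances among the three points at least $4R_{\min}$), find a heading at $\mathbf{x}_m$ minimizing the length of the Dubins path from $X_i$ through $\mathbf{x}_m$ to $X_f$. A path of type $C_1S_2C_3S_4C_5$ from $X_i$ via $\mathbf{x}_m$ to $X_f$ consists of minimum-radius arcs $C_1$ (starting at $X_i$), $C_3$ (passing through $\mathbf{x}_m$), $C_5$ (ending at $X_f$), each a left ($L$) or right ($R$) turn, connected by straight segments $S_2$ and $S_4$; the heading at $\mathbf{x}_m$ is free. *)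

From Stdlib Require Import Reals ZArith.
Open Scope R_scope.

Record config : Type := Config { cx : R; cy : R; ch : R }.

Inductive turn : Type := Lt | Rt.

Definition tsign (d : turn) : R := match d with Lt => 1 | Rt => -1 end.

(** Follow a minimum-radius arc (radius [rho]) of turning direction [d]
    through turning angle [th >= 0] starting from configuration [c]
    (closed-form solution of xdot = cos a, ydot = sin a, adot = +-1/rho). *)
Definition arc (rho : R) (d : turn) (th : R) (c : config) : config :=
  let s := tsign d in
  Config (cx c + s * rho * (sin (ch c + s * th) - sin (ch c)))
         (cy c - s * rho * (cos (ch c + s * th) - cos (ch c)))
         (ch c + s * th).

Definition straight (l : R) (c : config) : config :=
  Config (cx c + l * cos (ch c)) (cy c + l * sin (ch c)) (ch c).

Definition same_config (c c' : config) : Prop :=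
  cx c = cx c' /\ cy c = cy c' /\ exists k : Z, ch c = ch c' + 2 * PI * IZR k.

(** Parameters of a C1 S2 C3 S4 C5 path: angle of C1, length of S2,
    angle of C3 before the midpoint, angle of C3 after the midpoint,
    length of S4, angle of C5. *)
Record params : Type := Params {
  th1 : R; l2 : R; th3a : R; th3b : R; l4 : R; th5 : R }.

Definition cfg1 rho d1 (Xi : config) p := arc rho d1 (th1 p) Xi.
Definition cfg2 rho d1 Xi p := straight (l2 p) (cfg1 rho d1 Xi p).
Definition cfgm rho d1 d3 Xi p := arc rho d3 (th3a p) (cfg2 rho d1 Xi p).
Definition cfg3 rho d1 d3 Xi p := arc rho d3 (th3b p) (cfgm rho d1 d3 Xi p).
Definition cfg4 rho d1 d3 Xi p := straight (l4 p) (cfg3 rho d1 d3 Xi p).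
Definition cfg5 rho d1 d3 d5 Xi p := arc rho d5 (th5 p) (cfg4 rho d1 d3 Xi p).

Definition is_CSCSC (rho : R) (Xi : config) (xm : R * R) (Xf : config)
    (d1 d3 d5 : turn) (p : params) : Prop :=
  0 <= th1 p < 2 * PI /\
  0 <= l2 p /\
  0 <= th3a p /\ 0 <= th3b p /\ th3a p + th3b p < 2 * PI /\
  0 <= l4 p /\
  0 <= th5 p < 2 * PI /\
  cx (cfgm rho d1 d3 Xi p) = fst xm /\ cy (cfgm rho d1 d3 Xi p) = snd xm /\
  same_config (cfg5 rho d1 d3 d5 Xi p) Xf.

Definition path_length (rho : R) (p : params) : R :=
  rho * (th1 p + th3a p + th3b p + th5 p) + l2 p + l4 p.

(** S2 and S4 are parallel and lie on a common line: the line carrying S2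
    (through the end of C1, with heading of S2) and the line carrying S4
    (through the end of C3, with heading of S4) coincide. *)
Definition S2_S4_collinear (rho : R) (Xi : config) (d1 d3 : turn) (p : params) : Prop :=
  let a := cfg1 rho d1 Xi p in
  let b := cfg3 rho d1 d3 Xi p in
  sin (ch b - ch a) = 0 /\
  (cx b - cx a) * sin (ch a) - (cy b - cy a) * cos (ch a) = 0.

Definition dist2 (p q : R * R) : R :=
  sqrt ((fst p - fst q) ^ 2 + (snd p - snd q) ^ 2).

From Stdlib Require Import Reals ZArith Lra Lia Psatz.
Open Scope R_scope.

(* Collinearity of S2 and S4 forces the arc C3 to be empty: for a turn T the two
   lines are offset by rho (1 - cos T).  So the path is C S C with x_m on the
   straight segment, which is longer than 2 rho on both sides of x_m because of
   the 4 rho separation.  In the frame of that segment, the arc C3 of any other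
   path of the class must pass through the heading of the segment before x_m, and
   also after x_m (by the same argument run backwards from X_f); otherwise the
   closure equations contradict the length bound.  As C3 turns by less than
   2 pi, both passages happen at x_m itself, and then all parameters agree: the
   collinear path is the only path of its class. *)

Lemma sin_2PI_IZR (k : Z) : sin (2 * PI * IZR k) = 0.
Proof.
  replace (2 * PI * IZR k) with (IZR (2 * k) * PI) by (rewrite mult_IZR; ring).
  apply sin_eq_0_1; eauto.
Qed.

Lemma cos_2PI_IZR (k : Z) : cos (2 * PI * IZR k) = 1.
Proof.
  replace (2 * PI * IZR k) with (2 * (IZR k * PI)) by ring.
  rewrite cos_2a_sin, sin_eq_0_1 by eauto; ring.
Qed.

Lemma sin_add_2PI_IZR (x : R) (k : Z) : sin (x + 2 * PI * IZR k) = sin x.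
Proof. rewrite sin_plus, sin_2PI_IZR, cos_2PI_IZR; ring. Qed.

Lemma cos_add_2PI_IZR (x : R) (k : Z) : cos (x + 2 * PI * IZR k) = cos x.
Proof. rewrite cos_plus, sin_2PI_IZR, cos_2PI_IZR; ring. Qed.

Lemma cos_eq_1_2PI_IZR (x : R) : cos x = 1 -> exists k : Z, x = 2 * PI * IZR k.
Proof.
  intro Hc.
  assert (Hs : sin (x / 2) = 0).
  { replace x with (2 * (x / 2)) in Hc by field.
    rewrite cos_2a_sin in Hc; nra. }
  destruct (sin_eq_0_0 _ Hs) as [k Hk]; exists k; lra.
Qed.

Lemma IZR_2PI_eq_0 (k : Z) : -2 * PI < 2 * PI * IZR k < 2 * PI -> k = 0%Z.
Proof.
  intros [Hlo Hhi]; pose proof PI_RGT_0.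
  assert (-1 < IZR k < 1) as [Hl Hh] by (split; nra).
  apply lt_IZR in Hl, Hh; lia.
Qed.

Lemma exists_2PI_IZR_floor (x : R) :
  exists k : Z, 2 * PI * IZR k <= x < 2 * PI * IZR k + 2 * PI.
Proof.
  pose proof PI_RGT_0.
  destruct (base_Int_part (x / (2 * PI))) as [Hle Hgt].
  exists (Int_part (x / (2 * PI))).
  assert (Hx : x = 2 * PI * (x / (2 * PI))) by (field; lra).
  split; nra.
Qed.

Lemma same_config_sin_cos (c c' : config) :
  same_config c c' -> sin (ch c) = sin (ch c') /\ cos (ch c) = cos (ch c').
Proof.
  intros (_ & _ & k & Hk); rewrite Hk, sin_add_2PI_IZR, cos_add_2PI_IZR; auto.
Qed.

Lemma same_config_common (c1 c2 c : config) :
  same_config c1 c -> same_config c2 c -> same_config c1 c2.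
Proof.
  intros (Hx1 & Hy1 & k1 & Hk1) (Hx2 & Hy2 & k2 & Hk2).
  repeat split; try congruence.
  exists (k1 - k2)%Z; rewrite minus_IZR; lra.
Qed.

Definition opp_turn (d : turn) : turn := match d with Lt => Rt | Rt => Lt end.

Lemma tsign_opp_turn (d : turn) : tsign (opp_turn d) = - tsign d.
Proof. destruct d; simpl; ring. Qed.

Lemma tsign_sqr (d : turn) : tsign d * tsign d = 1.
Proof. destruct d; simpl; ring. Qed.

Lemma tsign_cases (d : turn) : tsign d = 1 \/ tsign d = -1.
Proof. destruct d; simpl; auto. Qed.

Lemma eq_of_tsign_sub_2PI_IZR (d : turn) (x y : R) (k : Z) :
  0 <= x < 2 * PI -> 0 <= y < 2 * PI -> tsign d * (x - y) = 2 * PI * IZR k -> x = y.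
Proof.
  intros Hx Hy E.
  destruct (tsign_cases d) as [Hs | Hs]; rewrite Hs in E.
  all: assert (k = 0%Z) by (apply IZR_2PI_eq_0; lra); subst k; simpl in E; lra.
Qed.

Lemma arc_0 (rho : R) (d : turn) (c : config) : arc rho d 0 c = c.
Proof.
  destruct c as [x y h]; unfold arc; simpl.
  rewrite Rmult_0_r, Rplus_0_r, !Rminus_diag, !Rmult_0_r, Rplus_0_r, Rminus_0_r.
  reflexivity.
Qed.

Lemma arc_add (rho : R) (d : turn) (a b : R) (c : config) :
  arc rho d b (arc rho d a c) = arc rho d (a + b) c.
Proof.
  destruct c as [x y h]; unfold arc; simpl.
  replace (h + tsign d * a + tsign d * b) with (h + tsign d * (a + b)) by ring.
  f_equal; ring.
Qed.

Lemma straight_arc_cross (rho : R) (d : turn) (T l : R) (c : config) :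
  let b := arc rho d T (straight l c) in
  (cx b - cx c) * sin (ch c) - (cy b - cy c) * cos (ch c) = tsign d * rho * (cos T - 1).
Proof.
  destruct c as [x y h]; unfold arc, straight; simpl.
  pose proof (sin2_cos2 h) as Hh; unfold Rsqr in Hh.
  replace (cos T) with (cos (h + tsign d * T - h)).
  - rewrite cos_minus, <- Hh; ring.
  - replace (h + tsign d * T - h) with (tsign d * T) by ring.
    destruct d; simpl; [f_equal; ring | rewrite <- cos_neg; f_equal; ring].
Qed.

Lemma straight_arc_collinear_angle_0 (rho : R) (d : turn) (T l : R) (c : config) :
  0 < rho -> 0 <= T < 2 * PI ->
  let b := arc rho d T (straight l c) in
  (cx b - cx c) * sin (ch c) - (cy b - cy c) * cos (ch c) = 0 -> T = 0.
Proof.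
  intros Hrho HT b Hcol.
  unfold b in Hcol; rewrite straight_arc_cross in Hcol.
  assert (HcosT : cos T = 1) by (destruct d; simpl in Hcol; nra).
  destruct (cos_eq_1_2PI_IZR T HcosT) as [k Hk].
  assert (k = 0%Z) by (apply IZR_2PI_eq_0; pose proof PI_RGT_0; lra).
  subst k; lra.
Qed.

Lemma sqr_le_of_le_sqrt (r z : R) : 0 <= r -> 0 <= z -> r <= sqrt z -> r * r <= z.
Proof.
  intros Hr Hz Hle; rewrite <- (sqrt_sqrt z Hz).
  apply Rmult_le_compat; lra.
Qed.

(* Applied with [b] running from a point of a circle of radius [rho] to its centre
   and [a] from the centre to the end of a tangent segment of length [l]. *)
Lemma two_rho_lt_of_far (rho l ax ay bx by' : R) :
  0 < rho -> 0 <= l ->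
  ax * ax + ay * ay = rho * rho + l * l -> bx * bx + by' * by' = rho * rho ->
  4 * rho * (4 * rho) <= (ax + bx) ^ 2 + (ay + by') ^ 2 -> 2 * rho < l.
Proof.
  intros Hrho Hl Ha Hb Hfar.
  assert (Hpar : (ax + bx) ^ 2 + (ay + by') ^ 2 + ((ax - bx) ^ 2 + (ay - by') ^ 2)
                 = 2 * (ax * ax + ay * ay) + 2 * (bx * bx + by' * by')) by ring.
  assert (Hl2 : 6 * (rho * rho) <= l * l)
    by (pose proof (pow2_ge_0 (ax - bx)); pose proof (pow2_ge_0 (ay - by')); lra).
  destruct (Rlt_or_le (2 * rho) l) as [Hlt | Hge]; [exact Hlt | nra].
Qed.

Lemma two_rho_lt_straight_after_arc (rho : R) (d : turn) (th l : R) (c : config) :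
  0 < rho -> 0 <= l ->
  let c' := straight l (arc rho d th c) in
  4 * rho <= dist2 (cx c, cy c) (cx c', cy c') -> 2 * rho < l.
Proof.
  intros Hrho Hl c' Hfar; unfold dist2 in Hfar; cbn [fst snd] in Hfar.
  apply sqr_le_of_le_sqrt in Hfar; [| lra | apply Rplus_le_le_0_compat; apply pow2_ge_0].
  unfold c', straight, arc in Hfar; cbn [cx cy ch] in Hfar.
  set (s := tsign d) in *; set (h := ch c) in *; set (h' := h + s * th) in *.
  pose proof (tsign_sqr d) as Hs; fold s in Hs.
  pose proof (sin2_cos2 h) as Hh; pose proof (sin2_cos2 h') as Hh'; unfold Rsqr in Hh, Hh'.
  apply (two_rho_lt_of_far rho l (l * cos h' + s * rho * sin h') (l * sin h' - s * rho * cos h')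
           (- s * rho * sin h) (s * rho * cos h)); auto.
  - transitivity (s * s * (rho * rho) * (sin h' * sin h' + cos h' * cos h')
                  + l * l * (sin h' * sin h' + cos h' * cos h')); [ring | rewrite Hs, Hh'; ring].
  - transitivity (s * s * (rho * rho) * (sin h * sin h + cos h * cos h));
      [ring | rewrite Hs, Hh; ring].
  - eapply Rle_trans; [exact Hfar | right; ring].
Qed.

Lemma two_rho_lt_straight_before_arc (rho : R) (d : turn) (th l : R) (c : config) :
  0 < rho -> 0 <= l ->
  let c' := arc rho d th (straight l c) in
  4 * rho <= dist2 (cx c, cy c) (cx c', cy c') -> 2 * rho < l.
Proof.
  intros Hrho Hl c' Hfar; unfold dist2 in Hfar; cbn [fst snd] in Hfar.
  apply sqr_le_of_le_sqrt in Hfar; [| lra | apply Rplus_le_le_0_compat; apply pow2_ge_0].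
  unfold c', straight, arc in Hfar; cbn [cx cy ch] in Hfar.
  set (s := tsign d) in *; set (h := ch c) in *; set (h' := h + s * th) in *.
  pose proof (tsign_sqr d) as Hs; fold s in Hs.
  pose proof (sin2_cos2 h) as Hh; pose proof (sin2_cos2 h') as Hh'; unfold Rsqr in Hh, Hh'.
  apply (two_rho_lt_of_far rho l (l * cos h - s * rho * sin h) (l * sin h + s * rho * cos h)
           (s * rho * sin h') (- s * rho * cos h')); auto.
  - transitivity (s * s * (rho * rho) * (sin h * sin h + cos h * cos h)
                  + l * l * (sin h * sin h + cos h * cos h)); [ring | rewrite Hs, Hh; ring].
  - transitivity (s * s * (rho * rho) * (sin h' * sin h' + cos h' * cos h'));
      [ring | rewrite Hs, Hh'; ring].
  - eapply Rle_trans; [exact Hfar | right; ring].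
Qed.

(* Frame of a collinear path whose straight segment, of length [m], leaves its
   first circle (direction [d1], centre [(-m, tsign d1 * rho)]) with heading 0
   and ends at x_m = (0, 0): leaving that circle with heading [h] instead,
   driving straight for [l], then turning in direction [d3] up to heading [H]
   also ends at x_m. *)
Definition csc_reaches (rho m : R) (d1 d3 : turn) (l h H : R) : Prop :=
  let s1 := tsign d1 in
  let s3 := tsign d3 in
  - m + s1 * rho * sin h + l * cos h + s3 * rho * (sin H - sin h) = 0 /\
  s1 * rho - s1 * rho * cos h + l * sin h - s3 * rho * (cos H - cos h) = 0.

Lemma csc_reaches_mirror (rho m : R) (d1 d3 : turn) (l h H : R) :
  csc_reaches rho m d1 d3 l h H ->
  csc_reaches rho m (opp_turn d1) (opp_turn d3) l (- h) (- H).
Proof.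
  unfold csc_reaches; rewrite !tsign_opp_turn, !sin_neg, !cos_neg.
  intros [Ex Ey]; split; lra.
Qed.

Lemma rotation_eq_0 (t u v : R) :
  u * cos t - v * sin t = 0 -> u * sin t + v * cos t = 0 -> u = 0 /\ v = 0.
Proof.
  intros Ex Ey; pose proof (sin2_cos2 t) as Ht; unfold Rsqr in Ht.
  split; nra.
Qed.

Lemma csc_reaches_first_half (rho : R) (d1 d3 : turn) (c : config) (thp thq m l a : R) :
  let cp := straight m (arc rho d1 thp c) in
  let cq := arc rho d3 a (straight l (arc rho d1 thq c)) in
  cx cq = cx cp -> cy cq = cy cp ->
  csc_reaches rho m d1 d3 l (ch (arc rho d1 thq c) - ch cp) (ch cq - ch cp).
Proof.
  intros cp cq Ex Ey; unfold cp, cq, straight, arc in Ex, Ey |- *; cbn [cx cy ch] in *.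
  apply Rminus_diag_eq in Ex, Ey.
  set (s1 := tsign d1) in *; set (s3 := tsign d3) in *.
  set (psi := ch c + s1 * thp) in *.
  set (h := ch c + s1 * thq - psi); set (H := ch c + s1 * thq + s3 * a - psi).
  replace (ch c + s1 * thq + s3 * a) with (psi + H) in Ex, Ey by (unfold H; ring).
  replace (ch c + s1 * thq) with (psi + h) in Ex, Ey by (unfold h; ring).
  rewrite (sin_plus psi h), (sin_plus psi H), (cos_plus psi h) in Ex.
  rewrite (cos_plus psi h), (sin_plus psi h), (cos_plus psi H) in Ey.
  apply (rotation_eq_0 psi); fold s1 s3; [rewrite <- Ex | rewrite <- Ey]; ring.
Qed.

(* Run backwards from X_f and reflected in the normal to the segment, the second
   half of the path takes the shape of a first half, with negated headings. *)
Lemma csc_reaches_second_half (rho : R) (d3 d5 : turn) (cp cq : config) (b m l thp thq : R) :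
  cx cq = cx cp -> cy cq = cy cp ->
  let ep := arc rho d5 thp (straight m cp) in
  let eq := arc rho d5 thq (straight l (arc rho d3 b cq)) in
  same_config eq ep ->
  csc_reaches rho m d5 d3 l (- (ch (arc rho d3 b cq) - ch cp)) (- (ch cq - ch cp)).
Proof.
  intros Ex0 Ey0 ep eq Hsame.
  destruct (same_config_sin_cos _ _ Hsame) as [Hsin Hcos].
  destruct Hsame as (Ex & Ey & _).
  unfold ep, eq, straight, arc in Ex, Ey, Hsin, Hcos |- *; cbn [cx cy ch] in *.
  rewrite Hsin in Ex; rewrite Hcos in Ey; rewrite Ex0 in Ex; rewrite Ey0 in Ey.
  apply Rminus_diag_eq in Ex, Ey.
  set (s3 := tsign d3) in *; set (s5 := tsign d5) in *.
  set (psi := ch cp) in *.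
  set (h := - (ch cq + s3 * b - psi)); set (H := - (ch cq - psi)).
  replace (ch cq + s3 * b) with (psi - h) in Ex, Ey by (unfold h; ring).
  replace (ch cq) with (psi - H) in Ex, Ey by (unfold H; ring).
  rewrite (sin_minus psi h), (sin_minus psi H), (cos_minus psi h) in Ex.
  rewrite (cos_minus psi h), (sin_minus psi h), (cos_minus psi H) in Ey.
  apply (rotation_eq_0 (- psi)); rewrite sin_neg, cos_neg; fold s3 s5;
    [rewrite <- Ex | rewrite <- Ropp_0, <- Ey]; ring.
Qed.

Lemma csc_reaches_Lt_sin_pos_false (rho m : R) (d1 : turn) (l h H : R) :
  0 < rho -> 2 * rho < m -> 0 <= l -> 0 < sin h ->
  csc_reaches rho m d1 Lt l h H -> False.
Proof.
  intros Hrho Hm Hl Hsh; unfold csc_reaches; simpl.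
  pose proof (COS_bound H) as [_ HcH]; pose proof (sin2_cos2 H) as PH; unfold Rsqr in PH.
  destruct d1; simpl; intros [E1 E2].
  - assert (0 <= l * sin h) by (apply Rmult_le_pos; lra).
    assert (rho * cos H <= rho) by nra.
    assert (HlS : l * sin h = 0) by lra.
    assert (Hl0 : l = 0) by (destruct (Rmult_integral _ _ HlS); lra).
    subst l.
    assert (HcH1 : cos H = 1) by (apply (Rmult_eq_reg_l rho); lra).
    assert (HsH0 : sin H = 0) by (rewrite HcH1 in PH; nra).
    rewrite HsH0 in E1; lra.
  - (* eliminating [l]: [m sin h = rho (cos h + cos (H - h) - 2) <= 0] *)
    pose proof (sin2_cos2 h) as Ph; unfold Rsqr in Ph.
    assert (Em : m = - 2 * rho * sin h + l * cos h + rho * sin H) by lra.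
    assert (El : l * sin h = rho + rho * cos H - 2 * rho * cos h) by lra.
    assert (Hmsin : m * sin h = rho * (cos h + (cos H * cos h + sin H * sin h) - 2)).
    { rewrite Em.
      transitivity (- 2 * rho * (sin h * sin h + cos h * cos h) + cos h * (l * sin h)
                    + 2 * rho * (cos h * cos h) + rho * sin H * sin h); [ring |].
      rewrite El, Ph; ring. }
    assert (cos H * cos h + sin H * sin h <= 1)
      by (pose proof (pow2_ge_0 (sin H - sin h)); pose proof (pow2_ge_0 (cos H - cos h)); nra).
    pose proof (COS_bound h); nra.
Qed.

Lemma cos_mul_1_sub_cos_le (x : R) : sin x <= 0 -> cos x * (1 - cos x) <= - sin x.
Proof.
  intros Hs; pose proof (sin2_cos2 x) as P; unfold Rsqr in P.
  pose proof (COS_bound x) as [Hc1 Hc2].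
  destruct (Rle_or_lt (cos x) 0) as [Hc | Hc]; [nra |].
  assert (Hsq : (cos x * (1 - cos x)) ^ 2 <= (- sin x) ^ 2) by nra.
  apply Rsqr_incr_0_var; unfold Rsqr; nra.
Qed.

Lemma csc_reaches_Lt_lower_false (rho m : R) (d1 : turn) (l h H : R) :
  0 < rho -> 2 * rho < m -> 0 <= l ->
  sin h <= 0 -> sin H <= 0 -> cos h <= cos H -> cos h < 1 ->
  csc_reaches rho m d1 Lt l h H -> False.
Proof.
  intros Hrho Hm Hl Hsh HsH Hcos Hc1; unfold csc_reaches; simpl.
  assert (HlS : l * sin h <= 0) by nra.
  destruct d1; simpl; intros [E1 E2].
  2: { (* [E2] says [l sin h = rho (1 - cos h) + rho (cos H - cos h) > 0] *) nra. }
  destruct (Rle_or_lt (cos h) 0) as [Hc0 | Hc0]; [nra |].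
  assert (Hsh' : sin h < 0).
  { destruct Hsh as [| Hsh0]; [assumption | exfalso].
    pose proof (sin2_cos2 h) as P; unfold Rsqr in P; rewrite Hsh0 in P; nra. }
  (* [l (- sin h) = rho (1 - cos H)], hence [l cos h <= rho] *)
  assert (Hlc : l * cos h * (- sin h) <= rho * (- sin h)).
  { pose proof (cos_mul_1_sub_cos_le h Hsh).
    assert (El : l * (- sin h) = rho * (1 - cos H)) by lra.
    transitivity (cos h * (rho * (1 - cos H))); [right; rewrite <- El; ring |].
    assert (0 < rho * cos h) by nra.
    transitivity (rho * (cos h * (1 - cos h))); nra. }
  apply Rmult_le_reg_r in Hlc; nra.
Qed.

Lemma csc_reaches_Lt_no_heading_0 (rho m : R) (d1 : turn) (l h H : R) :
  0 < rho -> 2 * rho < m -> 0 <= l -> 0 < h -> h <= H -> H < 2 * PI ->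
  csc_reaches rho m d1 Lt l h H -> False.
Proof.
  intros Hrho Hm Hl Hh0 HhH HH E.
  destruct (Rlt_or_le 0 (sin h)) as [Hs | Hs].
  - exact (csc_reaches_Lt_sin_pos_false rho m d1 l h H Hrho Hm Hl Hs E).
  - assert (HPI : PI <= h).
    { destruct (Rlt_or_le h PI) as [Hlt | Hge]; [| exact Hge].
      pose proof (sin_gt_0 h Hh0 Hlt); lra. }
    apply (csc_reaches_Lt_lower_false rho m d1 l h H); auto.
    + apply sin_le_0; lra.
    + apply cos_incr_1; lra.
    + rewrite <- cos_2PI; apply cos_increasing_1; lra.
Qed.

Lemma csc_reaches_shift_2PI (rho m : R) (d1 d3 : turn) (l h H : R) (k : Z) :
  csc_reaches rho m d1 d3 l h H ->
  csc_reaches rho m d1 d3 l (h + 2 * PI * IZR k) (H + 2 * PI * IZR k).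
Proof. unfold csc_reaches; rewrite !sin_add_2PI_IZR, !cos_add_2PI_IZR; auto. Qed.

Lemma csc_reaches_Lt_crosses_heading_0 (rho m : R) (d1 : turn) (l h H : R) :
  0 < rho -> 2 * rho < m -> 0 <= l -> h <= H ->
  csc_reaches rho m d1 Lt l h H -> exists k : Z, h <= 2 * PI * IZR k <= H.
Proof.
  intros Hrho Hm Hl HhH E.
  destruct (exists_2PI_IZR_floor h) as [k [Hk1 Hk2]].
  destruct (Req_dec h (2 * PI * IZR k)) as [Heq | Hne]; [exists k; lra |].
  destruct (Rle_or_lt (2 * PI * IZR (k + 1)) H) as [Hle | Hlt].
  { exists (k + 1)%Z; rewrite plus_IZR in *; lra. }
  exfalso; rewrite plus_IZR in Hlt.
  apply (csc_reaches_Lt_no_heading_0 rho m d1 l (h + 2 * PI * IZR (- k)) (H + 2 * PI * IZR (- k)));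
    try (rewrite opp_IZR; lra); auto.
  apply csc_reaches_shift_2PI; exact E.
Qed.

Lemma csc_reaches_crosses_heading_0 (rho m : R) (d1 d3 : turn) (l h a : R) :
  0 < rho -> 2 * rho < m -> 0 <= l -> 0 <= a ->
  csc_reaches rho m d1 d3 l h (h + tsign d3 * a) ->
  exists k : Z, 0 <= tsign d3 * (2 * PI * IZR k - h) <= a.
Proof.
  intros Hrho Hm Hl Ha E; destruct d3; simpl in *.
  - destruct (csc_reaches_Lt_crosses_heading_0 rho m d1 l h (h + 1 * a)) as [k Hk];
      auto; try lra.
    exists k; lra.
  - apply csc_reaches_mirror in E; simpl in E.
    destruct (csc_reaches_Lt_crosses_heading_0 rho m (opp_turn d1) l (- h) (- (h + -1 * a)))
      as [k Hk]; auto; try lra.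
    exists (- k)%Z; rewrite opp_IZR; lra.
Qed.

Lemma csc_reaches_Lt_heading_0_cos_1 (rho m : R) (d1 : turn) (l h : R) :
  0 < rho -> 0 < m -> 0 <= l ->
  csc_reaches rho m d1 Lt l h 0 -> cos h = 1.
Proof.
  intros Hrho Hm Hl; unfold csc_reaches; simpl; rewrite sin_0, cos_0.
  pose proof (sin2_cos2 h) as P; unfold Rsqr in P; pose proof (COS_bound h) as [Hc1 Hc2].
  destruct d1; simpl; intros [E1 E2].
  - assert (HlS : l * sin h = 0) by lra.
    assert (Hs0 : sin h = 0) by (destruct (Rmult_integral _ _ HlS); [subst l; lra | assumption]).
    rewrite Hs0 in P; nra.
  - (* eliminating [l]: [m sin h = 2 rho (cos h - 1) <= 0] *)
    assert (El : l * sin h = 2 * rho * (1 - cos h)) by lra.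
    assert (Hmsin : m * sin h = 2 * rho * (cos h - 1)).
    { replace m with (l * cos h - 2 * rho * sin h) by lra.
      transitivity (cos h * (l * sin h) - 2 * rho * (sin h * sin h)); [ring |].
      rewrite El; nra. }
    assert (sin h <= 0) by nra.
    nra.
Qed.

Lemma csc_reaches_heading_0 (rho m : R) (d1 d3 : turn) (l h : R) (k : Z) :
  0 < rho -> 0 < m -> 0 <= l ->
  csc_reaches rho m d1 d3 l h (2 * PI * IZR k) ->
  (exists j : Z, h = 2 * PI * IZR j) /\ l = m.
Proof.
  intros Hrho Hm Hl E.
  apply (csc_reaches_shift_2PI _ _ _ _ _ _ _ (- k)) in E.
  rewrite opp_IZR in E; replace (2 * PI * IZR k + 2 * PI * - IZR k) with 0 in E by ring.
  set (h0 := h + 2 * PI * - IZR k) in E.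
  assert (Hcos : cos h0 = 1).
  { destruct d3.
    - exact (csc_reaches_Lt_heading_0_cos_1 rho m d1 l h0 Hrho Hm Hl E).
    - apply csc_reaches_mirror in E; rewrite Ropp_0 in E; simpl in E.
      rewrite <- cos_neg; exact (csc_reaches_Lt_heading_0_cos_1 rho m _ l _ Hrho Hm Hl E). }
  split.
  - destruct (cos_eq_1_2PI_IZR h0 Hcos) as [j Hj].
    exists (j + k)%Z; rewrite plus_IZR; unfold h0 in Hj; lra.
  - assert (Hsin : sin h0 = 0).
    { pose proof (sin2_cos2 h0) as P; unfold Rsqr in P; rewrite Hcos in P; nra. }
    destruct E as [E1 _]; rewrite Hsin, Hcos, sin_0 in E1; lra.
Qed.

Lemma csc_reaches_halves_aligned (rho m2 m4 : R) (d1 d3 d5 : turn) (l2 l4 h a b : R) :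
  0 < rho -> 2 * rho < m2 -> 2 * rho < m4 -> 0 <= l2 -> 0 <= l4 ->
  0 <= a -> 0 <= b -> a + b < 2 * PI ->
  csc_reaches rho m2 d1 d3 l2 h (h + tsign d3 * a) ->
  csc_reaches rho m4 d5 d3 l4 (- (h + tsign d3 * (a + b))) (- (h + tsign d3 * a)) ->
  a = 0 /\ b = 0 /\ l2 = m2 /\ l4 = m4 /\ exists k : Z, h = 2 * PI * IZR k.
Proof.
  intros Hrho Hm2 Hm4 Hl2 Hl4 Ha Hb Hab E2 E4.
  pose proof PI_RGT_0; pose proof (tsign_cases d3) as Hs3.
  replace (- (h + tsign d3 * a)) with (- (h + tsign d3 * (a + b)) + tsign d3 * b) in E4 by ring.
  destruct (csc_reaches_crosses_heading_0 rho m2 d1 d3 l2 h a) as [k2 Hk2]; auto; try lra.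
  destruct (csc_reaches_crosses_heading_0 rho m4 d5 d3 l4 (- (h + tsign d3 * (a + b))) b)
    as [k4 Hk4]; auto; try lra.
  (* the two crossings of heading 0 together use up the whole turn [a + b < 2 PI] of C3 *)
  assert (Hk : (k2 + k4)%Z = 0%Z).
  { apply IZR_2PI_eq_0; rewrite plus_IZR.
    destruct Hs3 as [Hs | Hs]; rewrite Hs in *; lra. }
  assert (k4 = (- k2)%Z) by lia; subst k4; rewrite opp_IZR in Hk4.
  assert (Harr2 : h + tsign d3 * a = 2 * PI * IZR k2)
    by (destruct Hs3 as [Hs | Hs]; rewrite Hs in *; lra).
  assert (Harr4 : - (h + tsign d3 * (a + b)) + tsign d3 * b = 2 * PI * IZR (- k2))
    by (rewrite opp_IZR; destruct Hs3 as [Hs | Hs]; rewrite Hs in *; lra).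
  rewrite Harr2 in E2; rewrite Harr4 in E4.
  destruct (csc_reaches_heading_0 rho m2 d1 d3 l2 h k2 Hrho ltac:(lra) Hl2 E2)
    as [[j2 Hj2] El2].
  destruct (csc_reaches_heading_0 rho m4 d5 d3 l4 _ (- k2) Hrho ltac:(lra) Hl4 E4)
    as [[j4 Hj4] El4].
  assert (Ha0 : a = 0).
  { apply (eq_of_tsign_sub_2PI_IZR d3 a 0 (k2 - j2)); try lra.
    rewrite minus_IZR; lra. }
  assert (Hb0 : b = 0).
  { apply (eq_of_tsign_sub_2PI_IZR d3 b 0 (- k2 - j4)); try lra.
    rewrite minus_IZR, opp_IZR; rewrite opp_IZR in Harr4; lra. }
  repeat split; auto; exists j2; exact Hj2.
Qed.

Lemma S2_S4_collinear_C3_0 (rho : R) (Xi : config) (d1 d3 : turn) (p : params) :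
  0 < rho -> 0 <= th3a p -> 0 <= th3b p -> th3a p + th3b p < 2 * PI ->
  S2_S4_collinear rho Xi d1 d3 p -> th3a p = 0 /\ th3b p = 0.
Proof.
  intros Hrho Ha Hb Hab [_ Hcross].
  assert (H3 : cfg3 rho d1 d3 Xi p
               = arc rho d3 (th3a p + th3b p) (straight (l2 p) (cfg1 rho d1 Xi p)))
    by (unfold cfg3, cfgm, cfg2; apply arc_add).
  rewrite H3 in Hcross.
  apply straight_arc_collinear_angle_0 in Hcross; [lra | assumption | lra].
Qed.

Section CollinearPath.

Variables (rho : R) (Xi Xf : config) (xm : R * R) (d1 d3 d5 : turn) (p : params).
Hypotheses (Hp : is_CSCSC rho Xi xm Xf d1 d3 d5 p) (Ha0 : th3a p = 0) (Hb0 : th3b p = 0).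

Lemma cfgm_no_C3 : cfgm rho d1 d3 Xi p = straight (l2 p) (cfg1 rho d1 Xi p).
Proof. unfold cfgm, cfg2; rewrite Ha0; apply arc_0. Qed.

Lemma cfg5_no_C3 :
  cfg5 rho d1 d3 d5 Xi p = arc rho d5 (th5 p) (straight (l4 p) (cfgm rho d1 d3 Xi p)).
Proof. unfold cfg5, cfg4, cfg3; rewrite Hb0, arc_0; reflexivity. Qed.

Lemma CSCSC_straights_long :
  0 < rho -> 4 * rho <= dist2 (cx Xi, cy Xi) xm -> 4 * rho <= dist2 xm (cx Xf, cy Xf) ->
  2 * rho < l2 p /\ 2 * rho < l4 p.
Proof.
  intros Hrho Hi Hf.
  destruct Hp as (_ & Hl2 & _ & _ & _ & Hl4 & _ & Hmx & Hmy & Hx & Hy & _).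
  destruct xm as [xmx xmy]; cbn [fst snd] in Hmx, Hmy; subst xmx xmy.
  split.
  - apply (two_rho_lt_straight_after_arc rho d1 (th1 p) (l2 p) Xi Hrho Hl2).
    change (arc rho d1 (th1 p) Xi) with (cfg1 rho d1 Xi p); rewrite <- cfgm_no_C3; exact Hi.
  - apply (two_rho_lt_straight_before_arc rho d5 (th5 p) (l4 p) (cfgm rho d1 d3 Xi p) Hrho Hl4).
    rewrite <- cfg5_no_C3, Hx, Hy; exact Hf.
Qed.

Lemma CSCSC_halves_csc_reaches (q : params) :
  is_CSCSC rho Xi xm Xf d1 d3 d5 q ->
  let h := tsign d1 * (th1 q - th1 p) in
  csc_reaches rho (l2 p) d1 d3 (l2 q) h (h + tsign d3 * th3a q) /\
  csc_reaches rho (l4 p) d5 d3 (l4 q)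
    (- (h + tsign d3 * (th3a q + th3b q))) (- (h + tsign d3 * th3a q)).
Proof.
  intros Hq h.
  destruct Hp as (_ & _ & _ & _ & _ & _ & _ & Pmx & Pmy & Pf).
  destruct Hq as (_ & _ & _ & _ & _ & _ & _ & Qmx & Qmy & Qf).
  assert (Hmx : cx (cfgm rho d1 d3 Xi q) = cx (cfgm rho d1 d3 Xi p)) by congruence.
  assert (Hmy : cy (cfgm rho d1 d3 Xi q) = cy (cfgm rho d1 d3 Xi p)) by congruence.
  split.
  - rewrite cfgm_no_C3 in Hmx, Hmy.
    pose proof (csc_reaches_first_half rho d1 d3 Xi (th1 p) (th1 q) (l2 p) (l2 q) (th3a q)
                  Hmx Hmy) as E.
    cbn [ch arc straight] in E.
    replace (h + tsign d3 * th3a q)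
      with (ch Xi + tsign d1 * th1 q + tsign d3 * th3a q - (ch Xi + tsign d1 * th1 p))
      by (unfold h; ring).
    replace h with (ch Xi + tsign d1 * th1 q - (ch Xi + tsign d1 * th1 p)) by (unfold h; ring).
    exact E.
  - pose proof (csc_reaches_second_half rho d3 d5 (cfgm rho d1 d3 Xi p) (cfgm rho d1 d3 Xi q)
                  (th3b q) (l4 p) (l4 q) (th5 p) (th5 q) Hmx Hmy) as E.
    rewrite <- cfg5_no_C3 in E; specialize (E (same_config_common _ _ _ Qf Pf)).
    rewrite cfgm_no_C3 in E; cbn [ch arc straight cfgm cfg2 cfg1] in E.
    replace (- (h + tsign d3 * th3a q))
      with (- (ch Xi + tsign d1 * th1 q + tsign d3 * th3a q - (ch Xi + tsign d1 * th1 p)))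
      by (unfold h; ring).
    replace (- (h + tsign d3 * (th3a q + th3b q)))
      with (- (ch Xi + tsign d1 * th1 q + tsign d3 * th3a q + tsign d3 * th3b q
               - (ch Xi + tsign d1 * th1 p))) by (unfold h; ring).
    exact E.
Qed.

End CollinearPath.

Lemma CSCSC_collinear_unique (rho : R) (Xi Xf : config) (xm : R * R) (d1 d3 d5 : turn)
    (p q : params) :
  0 < rho -> 4 * rho <= dist2 (cx Xi, cy Xi) xm -> 4 * rho <= dist2 xm (cx Xf, cy Xf) ->
  is_CSCSC rho Xi xm Xf d1 d3 d5 p -> S2_S4_collinear rho Xi d1 d3 p ->
  is_CSCSC rho Xi xm Xf d1 d3 d5 q -> q = p.
Proof.
  intros Hrho Hi Hf Hp Hcol Hq.
  pose proof Hp as (Pt1 & Pl2 & Pa & Pb & Pab & Pl4 & Pt5 & _ & _ & _ & _ & kp & Hkp).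
  pose proof Hq as (Qt1 & Ql2 & Qa & Qb & Qab & Ql4 & Qt5 & _ & _ & _ & _ & kq & Hkq).
  destruct (S2_S4_collinear_C3_0 rho Xi d1 d3 p Hrho Pa Pb Pab Hcol) as [Ha0 Hb0].
  destruct (CSCSC_straights_long rho Xi Xf xm d1 d3 d5 p Hp Ha0 Hb0 Hrho Hi Hf) as [HL2 HL4].
  destruct (CSCSC_halves_csc_reaches rho Xi Xf xm d1 d3 d5 p Hp Ha0 Hb0 q Hq) as [E2 E4].
  destruct (csc_reaches_halves_aligned rho (l2 p) (l4 p) d1 d3 d5 (l2 q) (l4 q) _ _ _
              Hrho HL2 HL4 Ql2 Ql4 Qa Qb Qab E2 E4) as (Qa0 & Qb0 & El2 & El4 & k & Hk).
  assert (Et1 : th1 q = th1 p) by exact (eq_of_tsign_sub_2PI_IZR d1 _ _ k Qt1 Pt1 Hk).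
  assert (Et5 : th5 q = th5 p).
  { apply (eq_of_tsign_sub_2PI_IZR d5 _ _ (kq - kp) Qt5 Pt5); rewrite minus_IZR.
    cbn [cfg5 cfg4 cfg3 cfgm cfg2 cfg1 arc straight ch] in Hkp, Hkq.
    rewrite Ha0, Hb0 in Hkp; rewrite Qa0, Qb0, Et1 in Hkq; lra. }
  destruct p, q; cbn in *; subst; reflexivity.
Qed.

Theorem lemma3 (rho : R) (Xi Xf : config) (xm : R * R) (d1 d3 d5 : turn)
    (p : params) :
  0 < rho ->
  4 * rho <= dist2 (cx Xi, cy Xi) xm ->
  4 * rho <= dist2 xm (cx Xf, cy Xf) ->
  4 * rho <= dist2 (cx Xi, cy Xi) (cx Xf, cy Xf) ->
  is_CSCSC rho Xi xm Xf d1 d3 d5 p ->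
  S2_S4_collinear rho Xi d1 d3 p ->
  forall q : params, is_CSCSC rho Xi xm Xf d1 d3 d5 q ->
    path_length rho p <= path_length rho q.
Proof.
  intros Hrho Hi Hf _ Hp Hcol q Hq.
  rewrite (CSCSC_collinear_unique rho Xi Xf xm d1 d3 d5 p q Hrho Hi Hf Hp Hcol Hq).
  apply Rle_refl.
Qed.
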